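(* The set of limsup functions $X \to \mathbb{R}$ is the smallest collection $\mathcal{C}$ of functions $X \to \mathbb{R}$ such that (a) $\mathcal{C}$ contains all lower semicontinuous functions $X \to \mathbb{R}$, and (b) $\mathcal{C}$ is closed under pointwise limits from above, i.e. whenever $f_0 \ge f_1 \ge \cdots$ are in $\mathcal{C}$ and converge pointwise to a function $f : X \to \mathbb{R}$, then $f \in \mathcal{C}$.
   Context: Let $A$ be a non-empty countable set and $T$ a pruned tree on $A$ (a set of finite sequences of elements of $A$, closed under initial segments, in which every sequence has a proper extension in $T$). Let $X$ be the set of infinite branches of $T$, with the topology generated by the cylinder sets $O(s) = \{x \in X : s \text{ is an initial segment of } x\}$, $s \in T$. A function $f : X \to \mathbb{R}$ is a limsup function if there exists $u : T \to \mathbb{R}$ with $f(x) = \limsup_{t\to\infty} u(x_0,\dots,x_t)$ for every $x \in X$. *)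

From HB Require Import structures.
From mathcomp Require Import all_boot all_order all_algebra.
From mathcomp Require Import all_classical all_reals all_analysis.
Set Implicit Arguments. Unset Strict Implicit. Unset Printing Implicit Defensive.
Import Order.TTheory GRing.Theory Num.Theory numFieldNormedType.Exports.
Local Open Scope classical_set_scope.
Local Open Scope ring_scope.

Definition prefix (A : Type) (x : nat -> A) (n : nat) : seq A := mkseq x n.

Definition is_tree (A : Type) (T : set (seq A)) : Prop :=
  forall s t : seq A, T (s ++ t) -> T s.

Definition is_pruned (A : Type) (T : set (seq A)) : Prop :=
  forall s, T s -> exists t : seq A, (0 < size t)%N /\ T (s ++ t).

(* the set X of infinite branches of T *)
Definition branch (A : Type) (T : set (seq A)) :=
  {x : nat -> A | forall n, T (prefix x n)}.

Definition cyl (A : Type) (T : set (seq A)) (s : seq A) : set (branch T) :=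
  [set x | prefix (proj1_sig x) (size s) = s].

(* open sets of the topology generated by the cylinders O(s), s in T
   (the cylinders form a base, so U is open iff it is a union of cylinders) *)
Definition cyl_open (A : Type) (T : set (seq A)) (U : set (branch T)) : Prop :=
  forall x, U x -> exists s, T s /\ @cyl A T s x /\ @cyl A T s `<=` U.

Definition lsc (A : Type) (T : set (seq A)) (R : realType)
    (f : branch T -> R) : Prop :=
  forall r : R, cyl_open [set x | r < f x].

Definition limsup_fun (A : Type) (T : set (seq A)) (R : realType)
    (f : branch T -> R) : Prop :=
  exists u : seq A -> R, forall x : branch T,
    limn_esup (fun t : nat => (u (prefix (proj1_sig x) t.+1))%:E) = (f x)%:E.

Definition closed_dec_limits (A : Type) (T : set (seq A)) (R : realType)
    (C : set (branch T -> R)) : Prop :=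
  forall (g : nat -> branch T -> R) (f : branch T -> R),
    (forall n, C (g n)) ->
    (forall n x, g n.+1 x <= g n x) ->
    (forall x, (fun n => g n x) @ \oo --> f x) ->
    C f.

From Pilot Require Import Defs.
From mathcomp Require Import all_boot all_order all_algebra.
From mathcomp Require Import all_classical all_reals all_analysis.
From mathcomp Require Import lra.
Import Order.TTheory GRing.Theory Num.Theory numFieldNormedType.Exports.
Local Open Scope classical_set_scope.
Local Open Scope ring_scope.
Set Implicit Arguments. Unset Strict Implicit.

(* Call f a decreasing lsc limit (dec_lsc_limit) when f is the pointwise limit
   of a nonincreasing sequence of lsc functions. The theorem follows from:
   (1) every limsup function is a decreasing lsc limit: the tail suprema
       h_k x = sup_(t >= k) u(x_0, ..., x_t) are lsc and decrease to f;
   (2) a decreasing limit of decreasing lsc limits is again one, by the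
       diagonal H_m = min_(n <= m) h_(n,m);
   (3) every decreasing lsc limit f = lim_m H_m is a limsup function. The code
       u is built by examining at each length a rational q (each q infinitely
       often); q "fires" at s, and u(s) = q, when the cylinder O(s) lies where
       H_(pickle q + c) > q, c counting the earlier firings of q along s;
       otherwise u(s) = -|s|. A rational q > f x fires only finitely often along x
       (and not at all if pickle q is large), while q < f x fires infinitely often.
   Then L contains lsc functions by (3), is closed by (1)-(3), and is below
   any closed C containing lsc functions by (1). *)

(* [seq] also defines a [prefix]; throughout, [prefix] is the initial segment. *)
Local Notation prefix := Defs.prefix.

Section Cylinders.
Variables (A : Type) (T : set (seq A)).

Lemma prefix_sizeE (x : nat -> A) n : size (prefix x n) = n.
Proof. by rewrite /prefix size_mkseq. Qed.

Lemma prefix_takeE (x : nat -> A) m n : (m <= n)%N -> take m (prefix x n) = prefix x m.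
Proof. by move=> mn; rewrite /prefix /mkseq -map_take take_iota (minn_idPl mn). Qed.

Lemma prefix_agree_le (x y : nat -> A) m n : (m <= n)%N ->
  prefix y n = prefix x n -> prefix y m = prefix x m.
Proof. by move=> mn e; rewrite -(prefix_takeE x mn) -(prefix_takeE y mn) e. Qed.

Lemma cyl_openP (U : set (branch T)) : cyl_open U <->
  (forall x, U x -> exists N, forall y : branch T,
     prefix (proj1_sig y) N = prefix (proj1_sig x) N -> U y).
Proof.
split=> [oU x /oU [s [_ [xs sU]]]|H x /H [N HN]].
  by exists (size s) => y e; apply: sU; rewrite /cyl /= e.
exists (prefix (proj1_sig x) N); split; first exact: (proj2_sig x N).
by split=> [|y]; rewrite /cyl /= prefix_sizeE // => /HN.
Qed.

Lemma lsc_min (R : realType) (f g : branch T -> R) :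
  lsc f -> lsc g -> lsc (fun x => Num.min (f x) (g x)).
Proof.
move=> hf hg r; apply/cyl_openP => x /=; rewrite lt_min => /andP[rf rg].
have [N1 H1] := (cyl_openP _).1 (hf r) x rf.
have [N2 H2] := (cyl_openP _).1 (hg r) x rg.
exists (maxn N1 N2) => y e; rewrite lt_min; apply/andP; split.
  by apply: H1; apply: prefix_agree_le e; rewrite leq_maxl.
by apply: H2; apply: prefix_agree_le e; rewrite leq_maxr.
Qed.

End Cylinders.

Section RealSequences.
Variable R : realType.

Lemma cvg_eventually_close (u : nat -> R) l : u @ \oo --> l ->
  forall e, 0 < e -> exists N, forall n, (N <= n)%N -> l - e < u n < l + e.
Proof.
move=> /cvgrPdist_lt ul e e0; have [N _ HN] := ul e e0.
by exists N => n /HN; rewrite /= ltr_distlC.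
Qed.

Lemma nonincreasing_limit_le (u : nat -> R) l : (forall n, u n.+1 <= u n) ->
  u @ \oo --> l -> forall n, l <= u n.
Proof.
move=> ud ul n; rewrite -(cvg_lim _ ul) //.
by apply: nonincreasing_cvgn_ge; [exact/nonincreasing_seqP | exact: cvgP ul].
Qed.

Lemma finite_ub (g : nat -> R) n : exists B, forall j, (j < n)%N -> g j <= B.
Proof.
elim: n => [|n [B HB]]; first by exists 0.
exists (Num.max B (g n)) => j; rewrite ltnS leq_eqVlt => /orP[/eqP ->|jn].
  by rewrite le_max lexx orbT.
by rewrite le_max HB.
Qed.

End RealSequences.

Lemma bounded_counter_stabilizes (c : nat -> nat) (b : nat -> bool) J :
  (forall n, c n.+1 = c n + b n)%N -> (forall n, c n <= J)%N ->
  exists N, forall n, (N <= n)%N -> b n = false.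
Proof.
move=> cS cJ; apply: contrapT => stable.
have often N : exists2 n, (N <= n)%N & b n.
  apply: contrapT => nb; apply: stable; exists N => n Nn.
  by apply/negbTE/negP => bn; apply: nb; exists n.
have cmono : {homo c : m n / (m <= n)%N}.
  by apply: homo_leq => [//|m n p|n]; [exact: leq_trans | by rewrite cS leq_addr].
have grow k : exists n, (k <= c n)%N.
  elim: k => [|k [n kn]]; first by exists 0%N.
  have [m nm bm] := often n; exists m.+1.
  by rewrite cS bm addn1 ltnS (leq_trans kn) // cmono.
by have [n] := grow J.+1; rewrite ltnNge cJ.
Qed.

Lemma injective_unbounded (g : nat -> nat) : injective g ->
  forall B, exists m, (B <= g m)%N.
Proof.
move=> gi B; apply: contrapT => bounded.
have sub : {subset map g (iota 0 B.+1) <= iota 0 B}.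
  move=> y /mapP [m _ ->]; rewrite mem_iota /= add0n ltnNge; apply/negP => h.
  by apply: bounded; exists m.
have u : uniq (map g (iota 0 B.+1)) by rewrite map_inj_uniq // iota_uniq.
by have := uniq_leq_size u sub; rewrite size_map !size_iota ltnn.
Qed.

Section TailSuprema.
Variable R : realType.
Local Open Scope ereal_scope.

Lemma limn_esup_inf (u : (\bar R)^nat) : limn_esup u = ereal_inf (range (esups u)).
Proof. by rewrite limn_esup_lim; apply: cvg_lim => //; exact: cvg_esups_inf. Qed.

Lemma esups_fin_num (w : nat -> R) (l : R) :
  limn_esup (fun t => (w t)%:E) = l%:E ->
  forall k, esups (fun t => (w t)%:E) k \is a fin_num.
Proof.
set v := fun t => (w t)%:E => wl k.
have : ereal_inf (range (esups v)) < (l + 1)%:E.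
  by rewrite -limn_esup_inf wl lte_fin ltrDl.
move=> /ereal_inf_lt [_ [n _ <-]] vn.
have [B HB] := finite_ub w n.
have ub : esups v k <= (Num.max B (l + 1))%:E.
  apply: le_trans (nonincreasing_esups v (leq0n k)) _.
  apply: ge_ereal_sup => _ [j _ <-].
  case: (ltnP j n) => jn; first by rewrite lee_fin le_max HB.
  have vj : v j <= esups v n by apply: ereal_sup_ubound; exists j.
  by apply: (le_trans vj); apply: (le_trans (ltW vn)); rewrite lee_fin le_max lexx orbT.
have lb : v k <= esups v k by apply: ereal_sup_ubound; exists k => /=.
by move: ub lb; case: (esups v k).
Qed.

Lemma esups_cvg (w : nat -> R) (l : R) :
  limn_esup (fun t => (w t)%:E) = l%:E ->
  (fun k => fine (esups (fun t => (w t)%:E) k)) @ \oo --> l.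
Proof.
by move=> wl; apply: fine_cvg; rewrite -wl limn_esup_inf; exact: cvg_esups_inf.
Qed.

End TailSuprema.

Section DecreasingLimits.
Variables (A : Type) (T : set (seq A)) (R : realType).

Definition dec_lsc_limit (f : branch T -> R) : Prop :=
  exists h : nat -> branch T -> R,
    [/\ forall k, lsc (h k), forall k x, h k.+1 x <= h k x
      & forall x, h ^~ x @ \oo --> f x].

Lemma lsc_dec_lsc_limit (f : branch T -> R) : lsc f -> dec_lsc_limit f.
Proof. by move=> lf; exists (fun=> f); split=> // x; exact: cvg_cst. Qed.

(* A limsup function is the decreasing limit of its tail suprema
   h_k x = sup_(t >= k) u(x_0, ..., x_t), which are lsc since each term
   u(x_0, ..., x_t) depends only on finitely many coordinates. *)
Lemma limsup_dec_lsc_limit (f : branch T -> R) : limsup_fun f -> dec_lsc_limit f.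
Proof.
move=> [u uf]; pose v (x : branch T) t := (u (prefix (proj1_sig x) t.+1))%:E.
have fin x k : esups (v x) k \is a fin_num := esups_fin_num (uf x) k.
exists (fun k x => fine (esups (v x) k)); split.
- move=> k r; apply/cyl_openP => x /= rx.
  have : (r%:E < esups (v x) k)%E by rewrite -(fineK (fin x k)) lte_fin.
  move=> /ereal_sup_gt [_ [j /= kj <-]] rj; exists j.+1 => y xy.
  have : (r%:E < esups (v y) k)%E.
    apply: (lt_le_trans rj); rewrite /v -xy.
    by apply: ereal_sup_ubound; exists j.
  by rewrite -(fineK (fin y k)) lte_fin.
- move=> k x; apply: fine_le; try exact: fin.
  exact: nonincreasing_esups (leqnSn k).
- by move=> x; exact: esups_cvg (uf x).
Qed.

Section Diagonal.
Variables (h : nat -> nat -> branch T -> R).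

Fixpoint min_upto (k m : nat) (x : branch T) : R :=
  if k is k'.+1 then Num.min (min_upto k' m x) (h k m x) else h 0%N m x.

Lemma min_upto_le k m x n : (n <= k)%N -> min_upto k m x <= h n m x.
Proof.
elim: k => [|k IH]; first by rewrite leqn0 => /eqP ->.
rewrite leq_eqVlt => /orP[/eqP -> |]; first by rewrite /= ge_min lexx orbT.
by rewrite ltnS => /IH; rewrite /= ge_min => ->.
Qed.

Lemma min_upto_ge k m x c : (forall n, c <= h n m x) -> c <= min_upto k m x.
Proof. by move=> hc; elim: k => [|k IH] //=; rewrite le_min IH hc. Qed.

Lemma min_upto_lsc k m : (forall n, lsc (h n m)) -> lsc (min_upto k m).
Proof. by move=> hl; elim: k => [|k IH] //=; exact: lsc_min. Qed.

Lemma min_upto_nonincreasing k m x : (forall n, h n m.+1 x <= h n m x) ->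
  min_upto k m.+1 x <= min_upto k m x.
Proof.
move=> hd; elim: k => [|k IH] //=.
by rewrite le_min !ge_min IH hd orbT.
Qed.

End Diagonal.

Lemma dec_lsc_limit_diag (g : nat -> branch T -> R) (f : branch T -> R) :
  (forall n, dec_lsc_limit (g n)) -> (forall n x, g n.+1 x <= g n x) ->
  (forall x, g ^~ x @ \oo --> f x) -> dec_lsc_limit f.
Proof.
move=> /choice [h /all_and3 [hl hd hc]] gd gc.
have fh m x n : f x <= h n m x.
  apply: le_trans (nonincreasing_limit_le (hd n ^~ x) (hc n x) m).
  exact: nonincreasing_limit_le (gd ^~ x) (gc x) n.
exists (fun m => min_upto h m m); split.
- by move=> m; apply: min_upto_lsc.
- move=> m x /=; apply: le_trans _ (min_upto_nonincreasing m (fun n => hd n m x)).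
  by rewrite /= ge_min lexx.
- move=> x; apply/cvgrPdist_lt => e e0.
  have e2 : 0 < e / 2 by rewrite divr_gt0.
  have [n /(_ n (leqnn n)) /andP[_ gn]] := cvg_eventually_close (gc x) e2.
  have [M HM] := cvg_eventually_close (hc n x) e2.
  exists (maxn n M) => // m /= nMm.
  have /andP[_ hn] := HM m (leq_trans (leq_maxr _ _) nMm).
  have le_h := min_upto_le h m x (leq_trans (leq_maxl _ _) nMm).
  have ge_f := min_upto_ge m (fh m x).
  rewrite distrC ger0_norm ?subr_ge0 //; lra.
Qed.

End DecreasingLimits.

(* The rational examined at stage n: the first component of the n-th pair. *)
Definition scheduled (n : nat) : option rat :=
  omap fst (unpickle n : option (rat * nat)).

Lemma scheduled_often (q : rat) N : exists2 n, (N <= n)%N & scheduled n = Some q.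
Proof.
have inj : injective (fun m : nat => pickle (q, m)).
  by move=> m1 m2 /(pcan_inj pickleK) [].
have [m Nm] := injective_unbounded inj N.
by exists (pickle (q, m)) => //; rewrite /scheduled pickleK.
Qed.

Section LimsupCode.
Variables (A : Type) (T : set (seq A)) (R : realType) (H : nat -> branch T -> R).

Definition covers (q : rat) (k : nat) (s : seq A) : bool :=
  `[< cyl s `<=` [set y | ratr q < H k y] >].

Definition fires (q : rat) (s : seq A) (c : nat) : bool :=
  (scheduled (size s) == Some q) && covers q (pickle q + c)%N s.

Fixpoint level (q : rat) (s : seq A) (n : nat) : nat :=
  if n is n'.+1 then (level q s n' + fires q (take n' s) (level q s n'))%N
  else 0%N.

Definition limsup_code (s : seq A) : R :=
  if scheduled (size s) is Some q then
    if covers q (pickle q + level q s (size s))%N s then ratr q else - (size s)%:R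
  else - (size s)%:R.

Lemma level_take q s m n : (n <= m)%N -> level q (take m s) n = level q s n.
Proof.
elim: n => [|n IH] // nm /=.
by rewrite IH ?(ltnW nm) // take_takel ?(ltnW nm).
Qed.

Definition level_at (q : rat) (x : branch T) (n : nat) : nat :=
  level q (prefix (proj1_sig x) n) n.

Definition fires_at (q : rat) (x : branch T) (n : nat) : bool :=
  fires q (prefix (proj1_sig x) n) (level_at q x n).

Lemma level_atS q x n : level_at q x n.+1 = (level_at q x n + fires_at q x n)%N.
Proof.
have e : level q (prefix (proj1_sig x) n.+1) n = level_at q x n.
  by rewrite -(level_take q (prefix (proj1_sig x) n.+1) (leqnn n)) prefix_takeE.
by rewrite /level_at /= e prefix_takeE.
Qed.

Lemma limsup_code_prefix x n :
  (exists2 q, fires_at q x n & limsup_code (prefix (proj1_sig x) n) = ratr q)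
  \/ limsup_code (prefix (proj1_sig x) n) = - n%:R.
Proof.
rewrite /limsup_code /fires_at /fires /level_at prefix_sizeE.
case sn: (scheduled n) => [q|]; last by right.
case: ifP => cov; last by right.
by left; exists q; rewrite ?eqxx ?cov.
Qed.

Lemma fires_at_above q x n :
  fires_at q x n -> ratr q < H (pickle q + level_at q x n)%N x.
Proof.
move=> /andP[_ /asboolP]; apply.
by rewrite /cyl /= prefix_sizeE.
Qed.

Variable f : branch T -> R.
Hypothesis H_dec : forall m x, H m.+1 x <= H m x.
Hypothesis H_cvg : forall x, H ^~ x @ \oo --> f x.

Section Upper.
Variables (x : branch T) (q : rat) (J : nat).
Hypothesis HJq : H J x <= ratr q.

Lemma fires_below n : fires_at q x n -> (pickle q + level_at q x n < J)%N.
Proof.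
move=> /fires_at_above qH; rewrite ltnNge; apply/negP => Jk.
have HkJ := (nonincreasing_seqP (H ^~ x)).1 (fun m => H_dec m x) _ _ Jk.
by have := lt_le_trans qH (le_trans HkJ HJq); rewrite ltxx.
Qed.

Lemma level_bounded n : (level_at q x n <= J)%N.
Proof.
elim: n => [|n IH]; first by rewrite /level_at.
rewrite level_atS; case fq: (fires_at q x n); last by rewrite addn0.
by rewrite addn1 (leq_trans _ (fires_below fq)) // ltnS leq_addl.
Qed.

Lemma fires_finitely : exists N, forall n, (N <= n)%N -> fires_at q x n = false.
Proof. exact: bounded_counter_stabilizes (level_atS q x) level_bounded. Qed.

End Upper.

(* Eventually the code along x is at most f x + e: the finitely many
   rationals above f x + e that could fire at all have stopped firing,
   and the default value has dropped below f x + e. *)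
Lemma limsup_code_upper x e : 0 < e ->
  \forall n \near \oo, limsup_code (prefix (proj1_sig x) n) <= f x + e.
Proof.
move=> e0; have [J /(_ J (leqnn J)) /andP[_ HJ]] := cvg_eventually_close (@H_cvg x) e0.
have high q : f x + e <= ratr q -> H J x <= ratr q.
  by move=> hq; exact: ltW (lt_le_trans HJ hq).
have quiet : \forall n \near \oo, forall i : 'I_J, forall q,
    pickle q = i -> f x + e <= ratr q -> fires_at q x n = false.
  apply: filter_forall => i.
  have [[q [qi hq]]|none] := pselect (exists q, pickle q = i /\ f x + e <= ratr q).
    have [N HN] := fires_finitely (high q hq).
    exists N => // n /= Nn q' q'i _.
    have -> : q' = q by apply: (pcan_inj pickleK); rewrite q'i qi.
    exact: HN.
  by near=> n => q qi hq; exfalso; apply: none; exists q.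
near=> n.
have quiet_n : forall i : 'I_J, forall q,
    pickle q = i -> f x + e <= ratr q -> fires_at q x n = false.
  near: n; exact: quiet.
have [[q fq ->]|->] := limsup_code_prefix x n.
  rewrite leNgt; apply/negP => big.
  have qJ : (pickle q < J)%N.
    exact: leq_ltn_trans (leq_addr _ _) (fires_below (high q (ltW big)) fq).
  by rewrite (quiet_n (Ordinal qJ) q erefl (ltW big)) in fq.
rewrite lerNl; near: n; exact: nbhs_infty_ger.
Unshelve. all: by end_near. Qed.

Hypothesis H_lsc : forall m, lsc (H m).

Lemma covers_eventually x q c : ratr q < f x ->
  exists N, forall n, (N <= n)%N -> covers q (pickle q + c)%N (prefix (proj1_sig x) n).
Proof.
move=> qf; have qH : ratr q < H (pickle q + c)%N x.
  exact: lt_le_trans qf (nonincreasing_limit_le (H_dec ^~ x) (@H_cvg x) _).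
have [N HN] := (cyl_openP _).1 (@H_lsc (pickle q + c)%N (ratr q)) x qH.
exists N => n Nn; apply/asboolP => y; rewrite /cyl /= prefix_sizeE => xy.
exact: HN (prefix_agree_le Nn xy).
Qed.

(* ... and q, being examined infinitely often, fires infinitely often along x. *)
Lemma fires_often x q : ratr q < f x ->
  forall N, exists2 n, (N <= n)%N & fires_at q x n.
Proof.
move=> qf N; apply: contrapT => never.
have stuck n : (N <= n)%N -> level_at q x n = level_at q x N.
  elim: n => [|n IH]; first by rewrite leqn0 => /eqP ->.
  rewrite leq_eqVlt => /orP[/eqP <- //|]; rewrite ltnS => Nn.
  rewrite level_atS IH //; case fq: (fires_at q x n); last by rewrite addn0.
  by exfalso; apply: never; exists n.
have [M HM] := covers_eventually (level_at q x N) qf.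
have [n MNn sn] := scheduled_often q (maxn N M).
have Nn : (N <= n)%N by rewrite (leq_trans (leq_maxl _ _) MNn).
apply: never; exists n => //.
rewrite /fires_at /fires prefix_sizeE sn eqxx /= stuck // HM //.
by rewrite (leq_trans (leq_maxr _ _) MNn).
Qed.

Lemma limsup_code_fires q x n :
  fires_at q x n -> limsup_code (prefix (proj1_sig x) n) = ratr q.
Proof.
rewrite /fires_at /fires /limsup_code prefix_sizeE => /andP[/eqP -> cov].
by rewrite -/(level_at q x n) cov.
Qed.

End LimsupCode.

Lemma dec_lsc_limit_limsup (A : Type) (T : set (seq A)) (R : realType)
    (f : branch T -> R) : dec_lsc_limit f -> limsup_fun f.
Proof.
move=> [H [H_lsc H_dec H_cvg]]; exists (limsup_code H) => x.
set v := fun t => _; rewrite limn_esup_inf; apply/eqP; rewrite eq_le; apply/andP; split.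
  apply/lee_addgt0Pr => e e0.
  have [N _ HN] := limsup_code_upper H_dec H_cvg x e0.
  apply: le_trans (ereal_inf_lbound _) _; first by exists N.
  by apply: ge_ereal_sup => _ [j /= Nj <-]; rewrite lee_fin HN //= (leq_trans Nj).
apply: le_ereal_inf_tmp => _ [n _ <-]; apply/lee_subgt0Pr => e e0.
have [q] := @rat_in_itvoo R (f x - e) (f x) ltac:(lra).
rewrite in_itv /= => /andP[q_gt qf].
have [[|m] nm fm] := fires_often H_dec H_cvg H_lsc qf n.+1 => //.
apply: le_trans (ereal_sup_ubound _) => /=; last by exists m.
by rewrite /v (limsup_code_fires fm) lee_fin ltW.
Qed.

Theorem mainTheorem3 (R : realType) (A : countType) (hA : inhabited A)
    (T : set (seq A)) (hT : is_tree T) (hP : is_pruned T) :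
  let L := [set f : branch T -> R | limsup_fun f] in
  [/\ (forall f : branch T -> R, lsc f -> L f),
      closed_dec_limits L
    & forall C : set (branch T -> R),
        (forall f : branch T -> R, lsc f -> C f) ->
        closed_dec_limits C -> L `<=` C].
Proof.
move=> L; split.
- by move=> f /lsc_dec_lsc_limit /dec_lsc_limit_limsup.
- move=> g f Lg g_dec g_cvg; apply: dec_lsc_limit_limsup.
  exact: dec_lsc_limit_diag (fun n => limsup_dec_lsc_limit (Lg n)) g_dec g_cvg.
- move=> C C_lsc C_closed f /limsup_dec_lsc_limit [h [h_lsc h_dec h_cvg]].
  exact: C_closed h f (fun k => C_lsc _ (h_lsc k)) h_dec h_cvg.
Qed.
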